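(* Let $h\in R$. Then for every $i\ge1$, the binary representation of $h$ does not contain the string $1(10)^i0$ as a contiguous substring.
   Context: Stern's sequence $(a(n))_{n\ge0}$: $a(0)=0$, $a(1)=1$, $a(2n)=a(n)$, $a(2n+1)=a(n)+a(n+1)$; $s(n)=a(n+1)$ for $n\ge0$. $R$ is the set of record-setters of $s$, i.e. indices $v\ge0$ with $s(i)<s(v)$ for all $i<v$. The binary representation of a positive integer has no leading zeros; $0$ is represented by the string $0$. $x^i$ denotes $i$-fold concatenation of the string $x$. *)

From mathcomp Require Import all_boot.
Set Implicit Arguments. Unset Strict Implicit. Unset Printing Implicit Defensive.

Fixpoint stern_fuel (fuel n : nat) : nat :=
  match fuel with
  | 0 => 0
  | fuel'.+1 =>
      if n <= 1 then n
      else if odd n then stern_fuel fuel' n./2 + stern_fuel fuel' n./2.+1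
      else stern_fuel fuel' n./2
  end.

Definition stern (n : nat) : nat := stern_fuel n n.

Definition s (n : nat) : nat := stern n.+1.

Definition record_setter (v : nat) : Prop := forall i, i < v -> s i < s v.

(* binary representation, most significant bit first, true = 1;
   no leading zeros; 0 is represented by the string "0" *)
Fixpoint bin_aux (fuel n : nat) : seq bool :=
  match fuel with
  | 0 => [::]
  | fuel'.+1 => if n == 0 then [::] else rcons (bin_aux fuel' n./2) (odd n)
  end.

Definition bin (n : nat) : seq bool :=
  if n == 0 then [:: false] else bin_aux n n.

Definition spow (x : seq bool) (i : nat) : seq bool := flatten (nseq i x).

Lemma stern_check : [seq stern n | n <- iota 0 10] = [:: 0; 1; 1; 2; 1; 3; 2; 3; 1; 4].
Proof. by []. Qed.
Lemma bin_check : [:: bin 0; bin 6; bin 11] = [:: [:: false]; [:: true; true; false]; [:: true; false; true; true]].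
Proof. by []. Qed.

From mathcomp Require Import all_boot zify.

(* Writing n = [x w y] in binary, the pair (a n, a (n+1)) is obtained from
   (a 0, a 1) by letting each bit act as (p, q) |-> (p + q, q) (bit 1) or
   (p, p + q) (bit 0); these actions are monotone.  Replacing w = 1(10)^i 0 by
   w' = (10)^(i+1), of the same length, gives a smaller index h' < h whose pair
   dominates that of h componentwise, because the action of 1(10)^i 0 is
   dominated by that of (10)^(i+1).  Hence s h' >= s h, and h is no record. *)

Lemma stern_fuel_enough f g n :
  n <= f -> n <= g -> stern_fuel f n = stern_fuel g n.
Proof.
elim: f g n => [|f IH] [|g] n //=; [by case: n | by case: n | ].
move=> le_nf le_ng; case: ifP => // n_gt1.
have n_halves := odd_double_half n.
by case: ifP => odd_n; rewrite odd_n in n_halves;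
  rewrite (IH g) ?(IH g n./2.+1) //; lia.
Qed.

Lemma stern_fuelS f n : stern_fuel f.+1 n = if n <= 1 then n
  else if odd n then stern_fuel f n./2 + stern_fuel f n./2.+1 else stern_fuel f n./2.
Proof. by []. Qed.

Lemma stern_rec n : 1 < n ->
  stern n = if odd n then stern n./2 + stern n./2.+1 else stern n./2.
Proof.
case: n => [|n] // n_gt1; rewrite /stern stern_fuelS ifN -?ltnNge //.
have n_halves := odd_double_half n.+1.
by case: ifP => odd_n; rewrite odd_n in n_halves;
  rewrite (stern_fuel_enough n (n.+1./2)) ?(stern_fuel_enough n (n.+1./2.+1));
  lia.
Qed.

Lemma stern_double n : stern n.*2 = stern n.
Proof. by case: n => [|n] //; rewrite stern_rec ?odd_double ?doubleK //; lia. Qed.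

Lemma stern_doubleS n : stern n.*2.+1 = stern n + stern n.+1.
Proof.
by case: n => [|n] //; rewrite stern_rec /= ?odd_double /= ?uphalf_double //; lia.
Qed.

Definition push_bit (n : nat) (b : bool) : nat := n.*2 + b.

Definition bits_val (m : nat) (w : seq bool) : nat := foldl push_bit m w.

Lemma bits_val_cons m b w : bits_val m (b :: w) = bits_val (push_bit m b) w.
Proof. by []. Qed.

Lemma bits_val_cat m w1 w2 : bits_val m (w1 ++ w2) = bits_val (bits_val m w1) w2.
Proof. exact: foldl_cat. Qed.

Lemma bits_valE m w : bits_val m w = m * 2 ^ size w + bits_val 0 w.
Proof.
elim: w m => [|b w IH] m; first by rewrite muln1 addn0.
by rewrite !bits_val_cons [size _]/= expnS IH (IH (push_bit 0 b)) /push_bit -!mul2n; nia.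
Qed.

Lemma bits_val0_lt w : bits_val 0 w < 2 ^ size w.
Proof.
elim: w => [|b w IH] //; rewrite bits_val_cons [size _]/= expnS bits_valE.
by case: b; rewrite /push_bit -mul2n; lia.
Qed.

Lemma bits_val_bin_aux f n : n <= f -> bits_val 0 (bin_aux f n) = n.
Proof.
elim: f n => [|f IH] n /=; first by rewrite leqn0 => /eqP ->.
move=> le_nf; case: eqP => [-> | _] //.
rewrite /bits_val foldl_rcons -/(bits_val 0 _) IH.
  by rewrite /push_bit addnC odd_double_half.
by have := odd_double_half n; lia.
Qed.

Lemma bits_val_bin h : bits_val 0 (bin h) = h.
Proof. by rewrite /bin; case: eqP => [-> | _] //; apply: bits_val_bin_aux. Qed.

Lemma bits_val_infix_lt x y w u : size w = size u ->
  bits_val 0 w < bits_val 0 u -> bits_val 0 (x ++ w ++ y) < bits_val 0 (x ++ u ++ y).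
Proof.
move=> eq_size lt_wu; rewrite !bits_val_cat (bits_valE (bits_val _ w))
  (bits_valE (bits_val _ u)) ltn_add2r ltn_pmul2r ?expn_gt0 //.
by rewrite (bits_valE _ w) (bits_valE _ u) eq_size ltn_add2l.
Qed.

Lemma bits_val_false_true_lt m w u : size w = size u ->
  bits_val m (false :: w) < bits_val m (true :: u).
Proof.
move=> eq_size; rewrite !bits_val_cons !(bits_valE (push_bit _ _)) eq_size.
by have := bits_val0_lt w; rewrite eq_size /push_bit /=; nia.
Qed.

Definition stern_pair (n : nat) : nat * nat := (stern n, stern n.+1).

Definition stern_step (pq : nat * nat) (b : bool) : nat * nat :=
  if b then (pq.1 + pq.2, pq.2) else (pq.1, pq.1 + pq.2).

Lemma stern_pair_push n b : stern_pair (push_bit n b) = stern_step (stern_pair n) b.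
Proof.
rewrite /stern_pair /push_bit /stern_step; case: b => /=.
  by rewrite addn1 stern_doubleS -doubleS stern_double.
by rewrite addn0 stern_double stern_doubleS.
Qed.

Lemma stern_pair_bits m w :
  stern_pair (bits_val m w) = foldl stern_step (stern_pair m) w.
Proof. by elim: w m => [|b w IH] m //; rewrite bits_val_cons IH stern_pair_push. Qed.

Definition pair_le (p q : nat * nat) : bool := (p.1 <= q.1) && (p.2 <= q.2).

Lemma foldl_stern_step_mono w :
  {homo foldl stern_step ^~ w : p q / pair_le p q}.
Proof.
elim: w => [|b w IH] // [p1 p2] [q1 q2] /andP /= [le1 le2]; apply: IH.
by case: b; apply/andP; rewrite /=; split; lia.
Qed.

Lemma foldl_stern_step_infix_le x y u w :
  (forall pq, pair_le (foldl stern_step pq u) (foldl stern_step pq w)) ->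
  forall pq, pair_le (foldl stern_step pq (x ++ u ++ y))
                     (foldl stern_step pq (x ++ w ++ y)).
Proof. by move=> le_uw pq; rewrite !foldl_cat; apply/foldl_stern_step_mono/le_uw. Qed.

Lemma spowS x i : spow x i.+1 = x ++ spow x i.
Proof. by []. Qed.

(* (10) acts by the matrix [[1, 1], [1, 2]], whose powers keep this shape. *)
Lemma foldl_stern_step_alt i : exists a b, forall p q,
  foldl stern_step (p, q) (spow [:: true; false] i) = (a * p + b * q, b * p + (a + b) * q).
Proof.
elim: i => [|i [a [b IH]]]; first by exists 1, 0 => p q /=; congr pair; lia.
by exists (a + b), (a + b + b) => p q; rewrite spowS foldl_cat /= IH; congr pair; nia.
Qed.

Lemma foldl_stern_step_pattern_le i pq : pair_le
  (foldl stern_step pq ([:: true] ++ spow [:: true; false] i ++ [:: false]))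
  (foldl stern_step pq (spow [:: true; false] i.+1)).
Proof.
case: pq => p q; have [a [b alt_i]] := foldl_stern_step_alt i.
by rewrite spowS !foldl_cat /= !alt_i; apply/andP; split=> /=; nia.
Qed.

Lemma bits_val_alt_lt_pattern i : 0 < i ->
  bits_val 0 (spow [:: true; false] i.+1)
  < bits_val 0 ([:: true] ++ spow [:: true; false] i ++ [:: false]).
Proof.
case: i => [|j] // _; rewrite !spowS !cat_cons !cat0s.
rewrite [in X in X < _]bits_val_cons [in X in _ < X]bits_val_cons.
by apply: bits_val_false_true_lt; rewrite /= size_cat /= addn1.
Qed.

Theorem mainTheorem4 (h : nat) :
  record_setter h ->
  forall i : nat, 1 <= i ->
    ~~ infix ([:: true] ++ spow [:: true; false] i ++ [:: false]) (bin h).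
Proof.
move=> h_record i i_gt0; apply/negP => /infixP [x [y bin_h]].
set pat := [:: true] ++ _ in bin_h; set alt := spow [:: true; false] i.+1.
have h_def : h = bits_val 0 (x ++ pat ++ y) by rewrite -bin_h bits_val_bin.
set h' := bits_val 0 (x ++ alt ++ y).
have lt_h'h : h' < h.
  rewrite h_def; apply: bits_val_infix_lt; last exact: bits_val_alt_lt_pattern.
  by rewrite /pat /alt spowS !size_cat /= addn1.
have : pair_le (stern_pair h) (stern_pair h').
  rewrite h_def /h' !stern_pair_bits.
  exact/foldl_stern_step_infix_le/foldl_stern_step_pattern_le.
have := h_record h' lt_h'h; rewrite /s /pair_le /stern_pair /= => lt_s /andP [_].
by rewrite leqNgt lt_s.
Qed.
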